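(* Let $\mathcal{G}=\langle S,A,T,s_0,F\rangle$ be a two-player turn-based deterministic reachability game, let $X,Y\subseteq\mathrm{Win}_2(\mathcal{G},F)\setminus F$ with $X\cap Y=\emptyset$, and let $s\in\mathrm{Win}_2(\mathcal{G},F)\setminus(F\cup Y)$. Then the set of actions at $s$ that are subjectively rationalizable for P2 under the almost-sure winning condition in $\mathcal{G}$ (with goal $F$) is equal to the set of actions at $s$ that are subjectively rationalizable for P2 under the almost-sure winning condition in P2's perceptual game $\mathcal{G}^2_{X,Y}$ (with goal $F\cup Y$).
   Context: A two-player turn-based deterministic reachability game is a tuple $\mathcal{G}=\langle S,A,T,s_0,F\rangle$: $S$ finite, partitioned into P1 states $S_1$ and P2 states $S_2$; $A=A_1\cup A_2$ (P1 and P2 actions); $T:(S_1\times A_1)\cup(S_2\times A_2)\to S$ deterministic, possibly partial ($a$ enabled at $s$ iff $T(s,a)$ defined; every state has an enabled action); $s_0$ initial; $F\subseteq S$ a set of sink states (P2's goal). For a target $R\subseteq S$: $Z_0=R$, $Z_{k+1}=Z_k\cup\{s\in S_1:T(s,a)\in Z_k\ \forall\text{ enabled }a\}\cup\{s\in S_2:T(s,a)\in Z_k\text{ for some enabled }a\}$, and $\mathrm{Win}_2(\mathcal{G},R)=\bigcup_kZ_k$ (P2's sure/almost-sure winning region for reaching $R$). P2's perceptual game $\mathcal{G}^2_{X,Y}=\langle S,A,T,s_0,F\cup Y\rangle$ has the same transitions $T$ and goal set $F\cup Y$. In a game with transitions $T$ and P2-goal $R$, the set of actions at a state $q$ that are subjectively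 rationalizable for P2 under the almost-sure winning condition is: if $q\in S_2\cap\mathrm{Win}_2(\mathcal{G},R)\setminus R$, the set $\{a\text{ enabled at }q:T(q,a)\in\mathrm{Win}_2(\mathcal{G},R)\}$; otherwise (P1 states and P2 states outside $\mathrm{Win}_2(\mathcal{G},R)\setminus R$), all actions enabled at $q$. *)

From mathcomp Require Import all_boot.
Set Implicit Arguments. Unset Strict Implicit. Unset Printing Implicit Defensive.

(* S1 is the set of P1 states; P2 states are ~: S1. *)
Record game (S A : finType) := Game {
  S1 : {set S};
  A1 : {set A};
  A2 : {set A};
  trans : S -> A -> option S;
  init : S;
  goalF : {set S}
}.

Section Defs.
Variables (S A : finType).

Definition enabled (G : game S A) (s : S) (a : A) : bool :=
  trans G s a != None.

Definition wf_game (G : game S A) : Prop :=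
  (forall a : A, (a \in A1 G) || (a \in A2 G)) /\
  (forall s a, enabled G s a ->
     ((s \in S1 G) && (a \in A1 G)) || ((s \notin S1 G) && (a \in A2 G))) /\
  (forall s, exists a, enabled G s a) /\
  (forall s a t, s \in goalF G -> trans G s a = Some t -> t = s).

Fixpoint Zk (G : game S A) (R : {set S}) (k : nat) : {set S} :=
  match k with
  | 0 => R
  | k'.+1 =>
      Zk G R k'
      :|: [set s | (s \in S1 G) &&
                   [forall a, if trans G s a is Some t then t \in Zk G R k' else true]]
      :|: [set s | (s \notin S1 G) &&
                   [exists a, if trans G s a is Some t then t \in Zk G R k' else false]]
  end.

Definition Win2 (G : game S A) (R : {set S}) (s : S) : Prop :=
  exists k, s \in Zk G R k.

Definition perceptual (G : game S A) (X Y : {set S}) : game S A :=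
  Game (S1 G) (A1 G) (A2 G) (trans G) (init G) (goalF G :|: Y).

Definition rationalizable (G : game S A) (R : {set S}) (q : S) (a : A) : Prop :=
  enabled G q a /\
  ((q \notin S1 G) /\ Win2 G R q /\ (q \notin R) ->
     exists t, trans G q a = Some t /\ Win2 G R t).

End Defs.

From mathcomp Require Import all_boot.

(* The perceptual game has the same transitions as G, so only its goal
   F :|: Y differs.  Since Y already lies in the attractor of F, the attractor
   of F :|: Y is the attractor of F (the attractor is monotone in its target
   and idempotent).  As s lies in neither goal set, P2's rationalizable
   actions at s are determined by the same winning region in both games. *)

Set Implicit Arguments.
Unset Strict Implicit.
Unset Printing Implicit Defensive.

Section Attractor.
Variables (S A : finType) (G : game S A).
Implicit Types (B C R : {set S}).

Definition cpre2 B : {set S} :=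
  [set s | (s \in S1 G) &&
           [forall a, if trans G s a is Some t then t \in B else true]]
  :|: [set s | (s \notin S1 G) &&
               [exists a, if trans G s a is Some t then t \in B else false]].

Lemma ZkS R k : Zk G R k.+1 = Zk G R k :|: cpre2 (Zk G R k).
Proof. by rewrite /= setUA. Qed.

Lemma cpre2S B C : B \subset C -> cpre2 B \subset cpre2 C.
Proof.
move=> /subsetP sBC; apply/subsetP => s; rewrite !inE.
case/orP=> [/andP[-> /forallP allB] | /andP[-> /existsP[a exB]]].
- apply/orP; left; apply/forallP => a.
  by move: (allB a); case: (trans G s a) => // t /sBC.
- apply/orP; right; apply/existsP; exists a.
  by move: exB; case: (trans G s a) => // t /sBC.
Qed.

Lemma Zk_step_subset B C :
  B \subset C -> B :|: cpre2 B \subset C :|: cpre2 C.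
Proof. by move=> sBC; rewrite setUSS ?cpre2S. Qed.

Lemma Zk_subn R k l : k <= l -> Zk G R k \subset Zk G R l.
Proof.
elim: l => [|l IHl]; first by rewrite leqn0 => /eqP ->.
rewrite leq_eqVlt ltnS => /predU1P[-> // | /IHl sZ].
by rewrite ZkS (subset_trans sZ) ?subsetUl.
Qed.

Lemma Zk_subR R R' k : R \subset R' -> Zk G R k \subset Zk G R' k.
Proof. by move=> sRR'; elim: k => [//|k IHk]; rewrite !ZkS Zk_step_subset. Qed.

Lemma Zk_comp R R' K k :
  R \subset Zk G R' K -> Zk G R k \subset Zk G R' (k + K).
Proof.
by move=> sR; elim: k => [//|k IHk]; rewrite addSn !ZkS Zk_step_subset.
Qed.

Lemma Win2_uniform R (l : seq S) :
  {in l, forall y, Win2 G R y} -> exists K, {subset l <= Zk G R K}.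
Proof.
elim: l => [|x l IHl] winl; first by exists 0.
have [K sl] := IHl (fun y ly => winl y (mem_behead (s := x :: l) ly)).
have [k xZ] := winl x (mem_head x l).
exists (maxn k K) => y; rewrite inE => /predU1P[-> | ly].
- exact: subsetP (Zk_subn R (leq_maxl k K)) _ xZ.
- exact: subsetP (Zk_subn R (leq_maxr k K)) _ (sl y ly).
Qed.

Lemma Win2_setUr R (Y : {set S}) :
  {in Y, forall y, Win2 G R y} -> forall t, Win2 G (R :|: Y) t <-> Win2 G R t.
Proof.
move=> winY t; split=> [[k tZ] | [k tZ]]; last first.
  by exists k; apply: subsetP (Zk_subR k (subsetUl R Y)) _ tZ.
have [K sY] : exists K, {subset enum Y <= Zk G R K}.
  by apply: Win2_uniform => y; rewrite mem_enum; apply: winY.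
have sRY : R :|: Y \subset Zk G R K.
  apply/subsetP => y; rewrite inE => /orP[yR | yY].
    exact: subsetP (Zk_subn R (leq0n K)) _ yR.
  by apply: sY; rewrite mem_enum.
by exists (k + K); apply: subsetP (Zk_comp k sRY) _ tZ.
Qed.

End Attractor.

Lemma Zk_perceptual (S A : finType) (G : game S A) X Y R k :
  Zk (perceptual G X Y) R k = Zk G R k.
Proof. by elim: k => [//|k IHk]; rewrite /= IHk. Qed.

Lemma Win2_perceptual (S A : finType) (G : game S A) X Y R t :
  Win2 (perceptual G X Y) R t <-> Win2 G R t.
Proof. by split=> -[k tZ]; exists k; rewrite ?Zk_perceptual // in tZ *. Qed.

Lemma rationalizable_Win2_eq (S A : finType) (G G' : game S A) R R' q a :
  S1 G' = S1 G -> trans G' = trans G ->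
  (forall t, Win2 G R t <-> Win2 G' R' t) -> (q \in R) = (q \in R') ->
  rationalizable G R q a <-> rationalizable G' R' q a.
Proof.
move=> eqS1 eqT eqW eqR; rewrite /rationalizable /enabled eqS1 eqT -eqR.
split=> -[en win]; split=> // -[q2 [wq qR]].
- have [t [qt wt]] := win (conj q2 (conj (proj2 (eqW q) wq) qR)).
  by exists t; split=> //; apply/eqW.
- have [t [qt wt]] := win (conj q2 (conj (proj1 (eqW q) wq) qR)).
  by exists t; split=> //; apply/eqW.
Qed.

Theorem lemma3 (S A : finType) (G : game S A) (X Y : {set S}) (s : S) :
  wf_game G ->
  (forall x, x \in X -> Win2 G (goalF G) x /\ x \notin goalF G) ->
  (forall y, y \in Y -> Win2 G (goalF G) y /\ y \notin goalF G) ->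
  [disjoint X & Y] ->
  Win2 G (goalF G) s -> s \notin goalF G :|: Y ->
  forall a : A,
    rationalizable G (goalF G) s a <->
    rationalizable (perceptual G X Y) (goalF (perceptual G X Y)) s a.
Proof.
move=> _ _ winY _ _ sFY a.
have sF : s \notin goalF G by move: sFY; rewrite inE negb_or => /andP[].
have winY' : {in Y, forall y, Win2 G (goalF G) y} by move=> y /winY[].
apply: rationalizable_Win2_eq => //= [t | ]; last by rewrite (negbTE sF) (negbTE sFY).
exact: iff_trans (iff_sym (Win2_setUr winY' t)) (iff_sym (Win2_perceptual G X Y _ t)).
Qed.
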